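(* Let $(G,+)$ be an abelian group with identity $0$. Let $M=(E,\mathcal{I})$ and $N=(E',\mathcal{I}')$ be two transversal matroids over $G$ with partitions $\{E_i\}_{i\in[n]}$ of $E$ and $\{E'_i\}_{i\in[n]}$ of $E'$, respectively, such that $|E_i|=|E'_i|$ for all $i$. Assume there exists a total order $\preceq$ on $E\cup E'\cup(E+E')\cup\{0\}$ compatible with the group structure of $G$ such that: (1) $E$ and $E'$ are both positive; (2) for all $1\le i<j\le n$: $E_i\prec E_j$, $E'_i\prec E'_j$, and $|E_i|>|E_j|$; (3) $\max E\preceq \max E'$. Then $M$ is matched to $N$.
   Context: Given a partition of a finite set $E$ into disjoint sets $E_1,\dots,E_l$, the transversal matroid on $E$ has as independent sets those $X\subseteq E$ with $|X\cap E_i|\le 1$ for all $i$. A matroid over $G$ is a matroid whose finite ground set is a subset of $G$. $E+E'=\{a+b: a\in E, b\in E'\}$. A total order $\preceq$ on $A\subseteq G$ is compatible with the group structure if for all $a,b,c\in A$, $a\preceq b$ implies $a+c\preceq b+c$. An element $x$ is positive if $0\prec x$; a set is positive if all its elements are positive. For sets $A,B$, $A\prec B$ means $a\prec b$ for all $a\in A$, $b\in B$ (where $\prec$ means $\preceq$ and $\ne$). For matroids $M,N$ over $G$ with $r(M)=r(N)=n>0$ and bases $\mathcal{M}=\{a_1,\dots,a_n\}$ of $M$ and $\mathcal{N}=\{b_1,\dots,b_n\}$ of $N$, $\mathcal{M}$ is matched to $\mathcal{N}$ if there is a permutation $\pi\in S_n$ with $a_i+b_{\pi(i)}\notin E(M)$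 for all $i$. $M$ is matched to $N$ if for every basis $\mathcal{M}$ of $M$ there exists a basis $\mathcal{N}$ of $N$ such that $\mathcal{M}$ is matched to $\mathcal{N}$. *)

From HB Require Import structures.
From mathcomp Require Import all_boot all_order all_algebra.
From mathcomp Require Import finmap.
Set Implicit Arguments. Unset Strict Implicit. Unset Printing Implicit Defensive.
Import GRing.Theory.
Local Open Scope fset_scope.
Local Open Scope ring_scope.

Section Defs.
Variable G : zmodType.

Definition is_partition (E : {fset G}) (n : nat) (Es : 'I_n -> {fset G}) : Prop :=
  (forall i, Es i != fset0) /\
  (forall i j : 'I_n, i != j -> Es i `&` Es j = fset0) /\
  (forall x, x \in E <-> exists i, x \in Es i).

(* independent sets of the transversal matroid on E given by the partition Es *)
Definition tindep (E : {fset G}) (n : nat) (Es : 'I_n -> {fset G}) (X : {fset G}) : Prop :=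
  X `<=` E /\ forall i, (#|` X `&` Es i| <= 1)%N.

Definition tbasis (E : {fset G}) (n : nat) (Es : 'I_n -> {fset G}) (X : {fset G}) : Prop :=
  tindep E Es X /\ forall Y, tindep E Es Y -> X `<=` Y -> Y = X.

Definition bases_matched (E B B' : {fset G}) : Prop :=
  exists f : G -> G, {in B &, injective f} /\ [fset f a | a in B] = B' /\
    forall a, a \in B -> a + f a \notin E.

Definition matched_to (E : {fset G}) n (Es : 'I_n -> {fset G})
  (E' : {fset G}) m (Es' : 'I_m -> {fset G}) : Prop :=
  forall B, tbasis E Es B -> exists B', tbasis E' Es' B' /\ bases_matched E B B'.

Definition inA (E E' : {fset G}) (x : G) : Prop :=
  x \in E \/ x \in E' \/ (exists a b, a \in E /\ b \in E' /\ x = a + b) \/ x = 0.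

Definition compatible_total_order (A : G -> Prop) (le : rel G) : Prop :=
  (forall x, A x -> le x x) /\
  (forall x y, A x -> A y -> le x y -> le y x -> x = y) /\
  (forall x y z, A x -> A y -> A z -> le x y -> le y z -> le x z) /\
  (forall x y, A x -> A y -> le x y \/ le y x) /\
  (forall a b c, A a -> A b -> A c -> A (a + c) -> A (b + c) ->
     le a b -> le (a + c) (b + c)).

Definition ltr_of (le : rel G) (x y : G) : bool := le x y && (x != y).

Definition is_max (le : rel G) (S : {fset G}) (m : G) : Prop :=
  m \in S /\ forall x, x \in S -> le x m.

End Defs.

From HB Require Import structures.
From mathcomp Require Import all_boot all_order all_algebra.
From mathcomp Require Import finmap.

Set Implicit Arguments.
Unset Strict Implicit.
Unset Printing Implicit Defensive.

Import GRing.Theory.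
Local Open Scope fset_scope.
Local Open Scope ring_scope.

(* A basis of M picks one element a_i from each block E_i. Call a block E'_j
   escaping for a_i if a_i + b is outside E for some b in E'_j. Were at most i
   blocks escaping for a_i, the at least n - i others would have, as block
   sizes decrease, at least |E_i| + ... + |E_(n-1)| elements in total; their
   translates by a_i all lie strictly above a_i, hence in the union of
   E_i, ..., E_(n-1) minus a_i, which is too small. So a_i has more than i
   escaping blocks, a greedy choice for i = 0, 1, ... assigns distinct blocks
   E'_(s i) with escaping elements b_i, and the b_i form the basis of N matched
   to the a_i. *)

Lemma card_tail n (i : 'I_n) : #|[set k : 'I_n | (i <= k)%N]| = (n - i)%N.
Proof.
rewrite -sum1_card -[RHS]muln1 -sum_nat_const_nat big_geq_mkord.
by apply: eq_bigl => k; rewrite inE.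
Qed.

Lemma leq_tail_sum n (f : 'I_n -> nat) (i : 'I_n) (K : {set 'I_n}) :
  (forall x y : 'I_n, (x <= y)%N -> (f y <= f x)%N) ->
  (n - i <= #|K|)%N ->
  (\sum_(k in [set k : 'I_n | (i <= k)%N]) f k <= \sum_(k in K) f k)%N.
Proof.
move=> f_noninc K_big; set L := [set k : 'I_n | (i <= k)%N].
rewrite (big_setID K) [X in (_ <= X)%N](big_setID L) /= setIC leq_add2l.
apply: (@leq_trans (#|L :\: K| * f i)%N).
  rewrite -sum_nat_const; apply: leq_sum => k; rewrite !inE => /andP[_ le_ik].
  exact: f_noninc.
apply: (@leq_trans (#|K :\: L| * f i)%N).
  rewrite leq_mul2r -(leq_add2l #|L :&: K|) cardsID [in X in (_ <= X)%N]setIC.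
  by rewrite cardsID card_tail K_big orbT.
rewrite -sum_nat_const; apply: leq_sum => k; rewrite !inE -ltnNge => /andP[lt_ki _].
exact/f_noninc/ltnW.
Qed.

Lemma greedy_uniq_seq (T : finType) n (good : 'I_n -> {set T}) m :
  (forall i : 'I_n, (i < #|good i|)%N) ->
  (m <= n)%N -> exists t : seq T,
    [/\ size t = m, uniq t & forall (i : 'I_n) x0, (i < m)%N -> nth x0 t i \in good i].
Proof.
move=> good_big; elim: m => [|m IHm] lt_mn; first by exists [::].
have [t [size_t uniq_t good_t]] := IHm (ltnW lt_mn).
have [j good_j j_new] : exists2 j, j \in good (Ordinal lt_mn) & j \notin t.
  apply/subsetPn; apply: contraTN (good_big (Ordinal lt_mn)) => /subset_leq_card le_good.
  by rewrite -leqNgt (leq_trans le_good) //= -size_t card_size.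
exists (rcons t j); split; first by rewrite size_rcons size_t.
  by rewrite rcons_uniq j_new uniq_t.
move=> i x0; rewrite nth_rcons size_t ltnS leq_eqVlt => /orP[/eqP i_m|lt_im].
  by rewrite i_m ltnn eqxx (_ : i = Ordinal lt_mn) //; apply: val_inj.
by rewrite lt_im; apply: good_t.
Qed.

Lemma injective_choice (T : finType) n (good : 'I_n -> {set T}) :
  (forall i : 'I_n, (i < #|good i|)%N) ->
  exists2 s : 'I_n -> T, injective s & forall i, s i \in good i.
Proof.
move=> good_big; have [t [size_t uniq_t good_t]] := greedy_uniq_seq good_big (leqnn n).
pose tu : n.-tuple T := Tuple (introT eqP size_t).
exists (tnth tu); first exact/tuple_uniqP.
by move=> i; rewrite (tnth_nth (tnth tu i)); apply: good_t.
Qed.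

Lemma cardfs_le1P (T : choiceType) (S : {fset T}) :
  (#|` S| <= 1)%N <-> {in S &, forall x y, x = y}.
Proof.
split=> [S_le1 x y xS yS|S_eq].
  apply/eqP; apply: contraTT S_le1 => neq_xy; rewrite -ltnNge.
  have sub_xyS : [fset x; y] `<=` S by apply/fsubsetP => z /fset2P[] ->.
  by apply: leq_trans (fsubset_leq_card sub_xyS); rewrite cardfs2 neq_xy.
case: (fset_0Vmem S) => [->|[x xS]]; first by rewrite cardfs0.
rewrite (cardfsD1 x) xS (_ : S `\ x = fset0) ?cardfs0 //.
apply/fsetP => z; rewrite !inE; apply/negP => /andP[neq_zx z_S].
by rewrite (S_eq z x) ?eqxx in neq_zx.
Qed.

Lemma card_bigfcup (T : choiceType) (I : eqType) (r : seq I) (P : pred I)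
    (F : I -> {fset T}) :
  uniq r -> (forall i j, i != j -> F i `&` F j = fset0) ->
  #|` \bigcup_(i <- r | P i) F i| = (\sum_(i <- r | P i) #|` F i|)%N.
Proof.
move=> + disjF; elim: r => [|x r IHr] /=; first by rewrite !big_nil cardfs0.
case/andP=> x_r uniq_r; rewrite !big_cons; case: (P x); last exact: IHr.
rewrite cardfsU IHr // (_ : _ `&` _ = fset0) ?cardfs0 ?subn0 //.
apply/fsetP => z; rewrite !inE; apply/negP => /andP[z_x /bigfcupP[j /andP[j_r _] z_j]].
have /disjF/fsetP/(_ z) : x != j by apply: contraNneq x_r => ->.
by rewrite !inE z_x z_j.
Qed.

Section TransversalBases.

Variables (G : zmodType) (E : {fset G}) (n : nat) (Es : 'I_n -> {fset G}).
Hypothesis partE : is_partition E Es.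

Lemma block_uniq x i j : x \in Es i -> x \in Es j -> i = j.
Proof.
case: partE => _ [disj _] x_i x_j; apply/eqP; apply: contraTT isT => neq_ij.
by have /fsetP/(_ x) := disj _ _ neq_ij; rewrite !inE x_i x_j.
Qed.

Lemma block_of x : x \in E -> exists i, x \in Es i.
Proof. by case: partE => _ [_ cover] /cover. Qed.

Lemma injective_block_section (I : finType) (s : I -> 'I_n) (a : I -> G) :
  injective s -> (forall i, a i \in Es (s i)) -> injective a.
Proof.
move=> s_inj a_s i j eq_a; apply/s_inj/(block_uniq (a_s i)).
by rewrite eq_a.
Qed.

Lemma tindepU1 B y i :
  tindep E Es B -> B `&` Es i = fset0 -> y \in Es i -> tindep E Es (y |` B).
Proof.
case=> sub_BE indep_B B_i0 y_i; have y_E : y \in E by case: partE => _ [_ ->]; exists i.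
split=> [|k]; first by rewrite fsubUset fsub1set y_E sub_BE.
rewrite fsetIUl; have [<-|neq_ik] := eqVneq i k.
  by rewrite B_i0 fsetU0 (leq_trans (fsubset_leq_card (fsubsetIl _ _))) ?cardfs1.
rewrite fsetIC fsetI1 ifN ?fset0U ?indep_B //.
by apply: contra neq_ik => /(block_uniq y_i) ->.
Qed.

Lemma tbasis_section B :
  tbasis E Es B -> exists2 a : 'I_n -> G, forall i, a i \in Es i & B = [fset a i | i : 'I_n].
Proof.
move=> [[sub_BE indep_B] max_B].
have /fin_all_exists[a a_B] : forall i, exists x, x \in B `&` Es i.
  move=> i; case: (fset_0Vmem (B `&` Es i)) => [B_i0|[x x_Bi]]; last by exists x.
  case: partE => /(_ i)/fset0Pn[y y_i] _.
  have := max_B _ (tindepU1 (conj sub_BE indep_B) B_i0 y_i) (fsubsetU1 _ _).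
  move/fsetP/(_ y); rewrite !inE eqxx /= => y_B.
  by move/fsetP: B_i0 => /(_ y); rewrite !inE -y_B y_i.
exists a => [i|]; first by have /fsetIP[] := a_B i.
apply/fsetP => x; apply/idP/imfsetP => [x_B|[i _ ->]]; last by have /fsetIP[] := a_B i.
have [i x_i] := block_of (fsubsetP sub_BE x x_B).
by exists i => //; apply: ((cardfs_le1P _).1 (indep_B i) _ _ _ (a_B i)); rewrite inE x_B.
Qed.

Lemma tbasis_imfset (s : 'I_n -> 'I_n) (b : 'I_n -> G) :
  injective s -> (forall i, b i \in Es (s i)) -> tbasis E Es [fset b i | i : 'I_n].
Proof.
move=> s_inj b_s; have b_E i : b i \in E by case: partE => _ [_ ->]; exists (s i).
have b_indep : tindep E Es [fset b i | i : 'I_n].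
  split=> [|j]; first by apply/fsubsetP => _ /imfsetP[i _ ->].
  apply/cardfs_le1P => _ _ /fsetIP[/imfsetP[i _ ->] bi_j] /fsetIP[/imfsetP[k _ ->] bk_j].
  by congr b; apply: s_inj; rewrite (block_uniq (b_s i) bi_j) (block_uniq (b_s k) bk_j).
split=> // Y [sub_YE indep_Y] sub_bY; apply/eqP; rewrite eqEfsubset sub_bY andbT.
apply/fsubsetP => y y_Y; have [j y_j] := block_of (fsubsetP sub_YE y y_Y).
have /codomP[i j_si] := inj_card_onto s_inj (leqnn _) j.
have -> : y = b i.
  apply: ((cardfs_le1P _).1 (indep_Y j)); rewrite inE ?y_Y ?y_j //.
  by rewrite (fsubsetP sub_bY) ?j_si ?b_s //; apply/imfsetP; exists i.
by apply/imfsetP; exists i.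
Qed.

End TransversalBases.

Lemma bases_matched_imfset (G : zmodType) (E : {fset G}) (I : finType) (a b : I -> G) :
  injective a -> injective b -> (forall i, a i + b i \notin E) ->
  bases_matched E [fset a i | i : I] [fset b i | i : I].
Proof.
move=> a_inj b_inj ab_E; pose f x := oapp b 0 [pick i | a i == x].
have f_a i : f (a i) = b i.
  by rewrite /f; case: pickP => [j /eqP/a_inj -> //|/(_ i)]; rewrite eqxx.
exists f; split; [|split].
- by move=> _ _ /imfsetP[i _ ->] /imfsetP[j _ ->]; rewrite !f_a => /b_inj ->.
- apply/fsetP => y; apply/imfsetP/imfsetP => [[_ /imfsetP[i _ ->] ->]|[i _ ->]].
    by exists i; rewrite ?f_a.
  by exists (a i); rewrite ?f_a //; apply/imfsetP; exists i.
- by move=> _ /imfsetP[i _ ->]; rewrite f_a.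
Qed.

Definition escaping_blocks (G : zmodType) (E : {fset G}) n (Es' : 'I_n -> {fset G})
    (a : G) : {set 'I_n} :=
  [set j | ~~ ([fset a + b | b in Es' j] `<=` E)].

Section EscapingBlocks.

Variables (G : zmodType) (n : nat) (E E' : {fset G}) (Es Es' : 'I_n -> {fset G}).
Variable le : rel G.
Hypotheses (partE : is_partition E Es) (partE' : is_partition E' Es').
Hypothesis card_Es : forall i, #|` Es i| = #|` Es' i|.
Hypothesis le_order : compatible_total_order (inA E E') le.
Hypothesis pos_E' : forall x, x \in E' -> ltr_of le 0 x.
Hypothesis Es_increasing : forall i j : 'I_n, (i < j)%N ->
  forall a b, a \in Es i -> b \in Es j -> ltr_of le a b.
Hypothesis Es_shrinking : forall i j : 'I_n, (i < j)%N -> (#|` Es j| < #|` Es i|)%N.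

Lemma shift_in_later_block i a b :
  a \in Es i -> b \in E' -> a + b \in E ->
  a + b != a /\ exists2 k : 'I_n, (i <= k)%N & a + b \in Es k.
Proof.
move=> a_i b_E' ab_E; have a_E : a \in E by case: partE => _ [_ ->]; exists i.
case: le_order => _ [antisym [_ [_ compat]]]; have /andP[le_0b neq_0b] := pos_E' b_E'.
have A_a : inA E E' a by left.
have A_ab : inA E E' (a + b) by left.
have le_a_ab : le a (a + b).
  have := compat 0 b a; rewrite add0r addrC; apply=> //; [by do 3 right|by right; left].
have neq_ab_a : a + b != a by rewrite -subr_eq0 addrAC subrr add0r eq_sym.
split=> //; have [k ab_k] := block_of partE ab_E; exists k => //.
rewrite leqNgt; apply: contra neq_ab_a => lt_ki.
have /andP[le_ab_a _] := Es_increasing lt_ki ab_k a_i.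
by rewrite (antisym _ _ A_ab A_a le_ab_a le_a_ab).
Qed.

Lemma lt_card_escaping_blocks i a : a \in Es i -> (i < #|escaping_blocks E Es' a|)%N.
Proof.
move=> a_i; rewrite ltnNge; apply/negP => few_escaping.
set K := [set j | [fset a + b | b in Es' j] `<=` E].
have K_big : (n - i <= #|K|)%N.
  rewrite leq_subLR -[X in (X <= _)%N](card_ord n) -(cardsC K) addnC leq_add2r.
  by apply: leq_trans few_escaping; apply: subset_leq_card; apply/subsetP => j; rewrite !inE.
set U := \bigcup_(j in K) Es' j.
set W := \bigcup_(k in [set k : 'I_n | (i <= k)%N]) Es k.
have card_U : #|` U| = (\sum_(j in K) #|` Es j|)%N.
  rewrite card_bigfcup ?index_enum_uniq //; last by case: partE' => _ [].
  by apply: eq_bigr => j _; rewrite card_Es.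
have card_W : #|` W| = (\sum_(k in [set k : 'I_n | (i <= k)%N]) #|` Es k|)%N.
  by rewrite card_bigfcup ?index_enum_uniq //; case: partE => _ [].
have shift_U : [fset a + b | b in U] `<=` W `\ a.
  apply/fsubsetP => _ /imfsetP[b /bigfcupP[j /andP[_ j_K] b_j] ->].
  have b_E' : b \in E' by case: partE' => _ [_ ->]; exists j.
  have ab_E : a + b \in E.
    by move: j_K; rewrite inE => /fsubsetP; apply; apply/imfsetP; exists b.
  have [neq_ab_a [k le_ik ab_k]] := shift_in_later_block a_i b_E' ab_E.
  by rewrite in_fsetD1 neq_ab_a; apply/bigfcupP; exists k; rewrite ?mem_index_enum ?inE.
have a_W : a \in W by apply/bigfcupP; exists i; rewrite ?mem_index_enum ?inE ?leqnn.
have card_shift_U : #|` [fset a + b | b in U]| = #|` U|.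
  by apply: card_in_imfset => x y _ _ /addrI.
have card_Wa : #|` W| = (#|` W `\ a|).+1 by rewrite (cardfsD1 a) a_W.
have Es_noninc (x y : 'I_n) : (x <= y)%N -> (#|` Es y| <= #|` Es x|)%N.
  by rewrite leq_eqVlt => /orP[/eqP/val_inj -> //|/Es_shrinking/ltnW].
have := leq_tail_sum Es_noninc K_big.
by rewrite -card_W -card_U -card_shift_U card_Wa ltnNge (fsubset_leq_card shift_U).
Qed.

End EscapingBlocks.

Theorem theorem2p15 (G : zmodType) (n : nat) (E E' : {fset G})
  (Es Es' : 'I_n -> {fset G}) (le : rel G) :
  (0 < n)%N ->
  is_partition E Es -> is_partition E' Es' ->
  (forall i, #|` Es i| = #|` Es' i|) ->
  compatible_total_order (inA E E') le ->
  (* (1) E and E' are positive *)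
  (forall x, x \in E -> ltr_of le 0 x) ->
  (forall x, x \in E' -> ltr_of le 0 x) ->
  (* (2) *)
  (forall i j : 'I_n, (i < j)%N ->
     (forall a b, a \in Es i -> b \in Es j -> ltr_of le a b) /\
     (forall a b, a \in Es' i -> b \in Es' j -> ltr_of le a b) /\
     (#|` Es j| < #|` Es i|)%N) ->
  (* (3) max E <= max E' *)
  (forall m m', is_max le E m -> is_max le E' m' -> le m m') ->
  matched_to E Es E' Es'.
Proof.
move=> _ partE partE' card_Es le_order _ pos_E' Es_ordered _ B basis_B.
have [a a_Es ->] := tbasis_section partE basis_B.
have Es_increasing i j lt_ij := (Es_ordered i j lt_ij).1.
have Es_shrinking i j lt_ij := (Es_ordered i j lt_ij).2.2.
have [s s_inj s_escaping] := injective_choice (fun i =>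
  lt_card_escaping_blocks partE partE' card_Es le_order pos_E'
    Es_increasing Es_shrinking (a_Es i)).
have /fin_all_exists[b b_s] : forall i, exists b, b \in Es' (s i) /\ a i + b \notin E.
  move=> i; have := s_escaping i; rewrite inE => /fsubsetPn[_ /imfsetP[b b_si ->] ab_E].
  by exists b.
exists [fset b i | i : 'I_n]; split.
  by apply: tbasis_imfset s_inj _ => // i; case: (b_s i).
apply: bases_matched_imfset => [||i]; last by case: (b_s i).
  exact: (injective_block_section partE (s := id)).
by apply: (injective_block_section partE' s_inj) => i; case: (b_s i).
Qed.
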